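(* Let $J = \{k \in \mathbb{N} : \mathrm{N}(k+1) - \mathrm{N}(k) = 2\}$. Then $J = \{2^{m+1} - (m+1) - 1 : m \in \mathbb{N}\}$.
   Context: The function $\mathrm{N} : \mathbb{N} \to \mathbb{N}$, $\mathbb{N} = \{1,2,\dots\}$, is defined recursively by $\mathrm{N}(1) = 2$ and, for $k \ge 2$, $\mathrm{N}(k) = \max_{i \in \{2,\dots,k\}} \min(2i, \mathrm{N}(k-i+1) + i)$. *)

From mathcomp Require Import all_boot.
Set Implicit Arguments. Unset Strict Implicit. Unset Printing Implicit Defensive.

(* The recursive calls are on k - i + 1 <= k - 1, so fuel k suffices.
   The value at k = 0 (outside the domain N = {1,2,...}) is junk. *)
Fixpoint Naux (fuel k : nat) : nat :=
  match fuel with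
  | 0 => 2
  | fuel'.+1 =>
      if k <= 1 then 2
      else \max_(2 <= i < k.+1) minn (2 * i) (Naux fuel' (k - i + 1) + i)
  end.

Definition N (k : nat) : nat := Naux k k.

Lemma N_1 : N 1 = 2. Proof. by []. Qed.

(* N is affine with slope 1 on each block (jump m, jump m.+1], where
   jump m = 2^(m+1) - m - 2, and N k = k + m + 1 there; at the block
   boundaries the offset m increases by one, so N k.+1 - N k = 2 exactly when
   k = jump m with m >= 1.  The formula is proved by strong induction on k:
   for k in block m, every term min(2i, N(k-i+1) + i) is at most k + m + 1
   (for k - i + 1 <= jump m by induction, otherwise because 2i is small since
   k <= jump m.+1 = 2 jump m + m + 1), and i = (k + m + 1)/2 rounded up
   attains it. *)

From mathcomp Require Import all_boot.
From mathcomp Require Import zify.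

Lemma Naux_fuel_irrelevant f1 f2 k :
  k <= f1 -> k <= f2 -> Naux f1 k = Naux f2 k.
Proof.
elim: f1 f2 k => [|f1 IHf1] [|f2] k /= k_f1 k_f2 //;
  try by have -> : k <= 1 by lia.
case: ifP => // _; apply: eq_big_nat => i /andP [i_ge2 i_lek].
by congr (minn _ (_ + _)); apply: IHf1; lia.
Qed.

Lemma N_rec k : 1 < k ->
  N k = \max_(2 <= i < k.+1) minn (2 * i) (N (k - i + 1) + i).
Proof.
case: k => [//|k] k_gt1; rewrite /N /=.
have -> : (k.+1 <= 1) = false by lia.
apply: eq_big_nat => i /andP [i_ge2 i_lek].
by congr (minn _ (_ + _)); apply: Naux_fuel_irrelevant; lia.
Qed.

Definition jump (m : nat) : nat := 2 ^ (m + 1) - (m + 1) - 1.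

Lemma jump0 : jump 0 = 0. Proof. by []. Qed.

Lemma jumpS m : jump m.+1 = 2 * jump m + m + 1.
Proof.
have := @ltn_expl 2 (m + 1) isT.
by rewrite /jump addSn expnS; lia.
Qed.

Lemma leq_jump : {mono jump : m n / m <= n}.
Proof. by apply/leq_mono/(homo_ltn ltn_trans) => m; rewrite jumpS; lia. Qed.

Lemma ltn_jump : {mono jump : m n / m < n}.
Proof. exact/leqW_mono/leq_jump. Qed.

Lemma jump_block {k : nat} : 0 < k -> exists m, jump m < k <= jump m.+1.
Proof.
elim: k => [//|[|k] IHk] _; first by exists 0.
have [m /andP [jm_lt jm1_ge]] := IHk isT.
have [k_lt | k_eq] := ltnP k.+1 (jump m.+1); first by exists m; lia.
by exists m.+1; rewrite (jumpS m.+1); lia.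
Qed.

Section BlockStep.

Variables (k m : nat).
Hypothesis k_gt1 : 1 < k.
Hypothesis k_block : jump m < k <= jump m.+1.
Hypothesis IHk : forall j, j < k -> forall m', jump m' < j <= jump m'.+1 ->
  N j = j + m' + 1.

Let block_offset j : 0 < j < k -> exists2 m', jump m' < j <= jump m'.+1 &
  N j = j + m' + 1.
Proof.
case/andP=> j_gt0 j_ltk; have [m' j_block] := jump_block j_gt0.
by exists m' => //; apply: IHk.
Qed.

Lemma N_block_term_le i : 2 <= i <= k ->
  minn (2 * i) (N (k - i + 1) + i) <= k + m + 1.
Proof.
move=> /andP [i_ge2 i_lek]; have m_jumpS := jumpS m.
have [m' /andP [jm'_lt jm'_ge] ->] := block_offset (k - i + 1) ltac:(lia).
have [j_le | j_gt] := leqP (k - i + 1) (jump m); last by lia.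
suff : m' < m by lia.
by rewrite -ltn_jump; lia.
Qed.

Lemma N_block_term_ge : exists2 i, 2 <= i < k.+1 &
  k + m + 1 <= minn (2 * i) (N (k - i + 1) + i).
Proof.
case: m k_block => [|q] /andP [jq_lt k_le].
  by move: k_le; rewrite jumpS jump0; lia.
have jq1 := jumpS q; have jq2 := jumpS q.+1.
pose i := (k + q + 3) %/ 2; have i_bounds : k + q + 2 <= 2 * i <= k + q + 3.
  by rewrite /i; lia.
exists i; first by lia.
have [m' /andP [jm'_lt jm'_ge] ->] := block_offset (k - i + 1) ltac:(lia).
suff : q <= m' by lia.
by rewrite -ltnS -ltn_jump; lia.
Qed.

End BlockStep.

Lemma N_block k m : jump m < k <= jump m.+1 -> N k = k + m + 1.
Proof.
elim/ltn_ind: k m => k IHk m k_block.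
have [k_le1 | k_gt1] := leqP k 1.
  have k1 : k = 1 by lia.
  case: m k_block => [|m]; first by rewrite k1.
  by have := jumpS m; lia.
rewrite N_rec //; apply/eqP; rewrite eqn_leq; apply/andP; split.
  apply/bigmax_leqP_seq => i; rewrite mem_iota => i_range _.
  by apply: (@N_block_term_le k m k_gt1 k_block IHk); lia.
have [i i_range term_ge] := @N_block_term_ge k m k_gt1 k_block IHk.
by apply: (bigmaxn_sup_seq i) term_ge; rewrite ?mem_iota; lia.
Qed.

Theorem lemma7p20 (k : nat) :
  (1 <= k /\ N k.+1 - N k = 2) <->
  (exists m : nat, 1 <= m /\ k = 2 ^ (m + 1) - (m + 1) - 1).
Proof.
split=> [[k_gt0 N_diff] | [[|m] [//= _ ->]]].
  have [m k_block] := jump_block k_gt0.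
  have [k_lt | k_eq] := ltnP k (jump m.+1).
    by move: N_diff; rewrite (N_block k m) // (N_block k.+1 m); lia.
  by exists m.+1; rewrite -/(jump m.+1); lia.
rewrite -/(jump m.+1).
have jm_lt : jump m < jump m.+1 by rewrite ltn_jump.
have jm1_lt : jump m.+1 < jump m.+2 by rewrite ltn_jump.
by rewrite (N_block _ m.+1) ?(N_block _ m); lia.
Qed.
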